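(* Let $g_n$ ($n\ge0$) denote the parity of the number of digits equal to $1$ in the negabinary representation of $n$. Then the infinite word $g_0g_1g_2\cdots$ is cube-free: there is no nonempty finite word $X$ over $\{0,1\}$ such that $XXX$ occurs as a block of consecutive terms $g_a g_{a+1}\cdots g_{a+3|X|-1}$ for some $a\ge0$.
   Context: Every nonnegative integer $n$ has a unique representation $n=\sum_{i\ge0} d_i(-2)^i$ with digits $d_i\in\{0,1\}$, only finitely many nonzero; this is the negabinary (base $-2$) representation. Parity means the number modulo $2$. *)

From Stdlib Require Import ZArith List Lia.
Import ListNotations.
Open Scope Z_scope.

Fixpoint negabin_eval (ds : list Z) : Z :=
  match ds with
  | [] => 0
  | d :: ds' => d + (-2) * negabin_eval ds'
  end.

(* Fuel bounds the
   recursion; fuel |z|+1 always suffices (|(z-d)/(-2)| < |z| for z <> 0,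
   |.| <= 1 case terminates in <= 2 steps). *)
Fixpoint negabin_digits_aux (fuel : nat) (z : Z) : list Z :=
  match fuel with
  | O => []
  | S f =>
      if Z.eqb z 0 then []
      else let d := Z.modulo z 2 in d :: negabin_digits_aux f ((z - d) / (-2))
  end.

Definition negabin_digits (n : nat) : list Z :=
  negabin_digits_aux (S (S n)) (Z.of_nat n).

Definition g (n : nat) : nat :=
  Nat.modulo (length (filter (fun d => Z.eqb d 1) (negabin_digits n))) 2.

(** Extend [g] to all integers through their negabinary digits, as a
    boolean [negaparity].  Since [2k] has the digits of [-k] shifted by a
    [0], and [2k+1] the same shifted by a [1], the extension [f] satisfies
    [f (2k) = f (-k)] and [f (2k+1) = negb (f (2k))].  These two identities
    alone exclude cubes: they forbid three equal consecutive values, a cube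
    of odd period [m > 1] would force three equal values at consecutive even
    places, and a cube of even period [2t] can be moved to an even start and
    then folded by [2k |-> -k] into a cube of period [t]; descent on the
    period concludes. *)

From Stdlib Require Import ZArith List Lia.

Open Scope Z_scope.

Definition ones_parity (ds : list Z) : bool :=
  Nat.odd (length (filter (fun d => d =? 1) ds)).

(* Bounds the number of negabinary digits; plain [|z| + 1] would not strictly
   decrease along the digit recursion, which maps -1 to 1. *)
Definition digit_bound (z : Z) : Z :=
  if orb (z =? 0) (z =? 1) then z else Z.abs z + 1.

Definition negaparity (z : Z) : bool :=
  ones_parity (negabin_digits_aux (Z.to_nat (digit_bound z)) z).

Lemma digit_bound_nonneg (z : Z) : 0 <= digit_bound z.
Proof.
  unfold digit_bound.
  destruct (Z.eqb_spec z 0), (Z.eqb_spec z 1); simpl; lia.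
Qed.

Lemma digit_bound_lt (z : Z) :
  z <> 0 -> digit_bound ((z - z mod 2) / (-2)) < digit_bound z.
Proof.
  intros Hz.
  assert (Hq : 0 <= z mod 2 < 2 /\ z = z mod 2 - 2 * ((z - z mod 2) / (-2)))
    by (Z.div_mod_to_equations; lia).
  revert Hq; generalize ((z - z mod 2) / (-2)); generalize (z mod 2); intros d q Hq.
  unfold digit_bound.
  destruct (Z.eqb_spec q 0), (Z.eqb_spec q 1), (Z.eqb_spec z 0),
    (Z.eqb_spec z 1); simpl; lia.
Qed.

Lemma negabin_digits_aux_cons (f : nat) (z : Z) :
  z <> 0 ->
  negabin_digits_aux (S f) z = z mod 2 :: negabin_digits_aux f ((z - z mod 2) / (-2)).
Proof. intros Hz; simpl; rewrite (proj2 (Z.eqb_neq z 0) Hz); reflexivity. Qed.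

Lemma negabin_digits_aux_succ (f : nat) (z : Z) :
  digit_bound z <= Z.of_nat f ->
  negabin_digits_aux (S f) z = negabin_digits_aux f z.
Proof.
  revert z; induction f as [| f IH]; intros z Hf.
  - assert (z = 0) as ->.
    { destruct (Z.eq_dec z 0) as [| Hz]; [assumption |].
      pose proof (digit_bound_lt z Hz).
      pose proof (digit_bound_nonneg ((z - z mod 2) / (-2))); lia. }
    reflexivity.
  - destruct (Z.eq_dec z 0) as [-> | Hz]; [reflexivity |].
    rewrite !(negabin_digits_aux_cons _ z Hz), IH; [reflexivity |].
    pose proof (digit_bound_lt z Hz); lia.
Qed.

Lemma negaparity_fuel (f : nat) (z : Z) :
  digit_bound z <= Z.of_nat f ->
  negaparity z = ones_parity (negabin_digits_aux f z).
Proof.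
  intros Hf; unfold negaparity.
  pose proof (digit_bound_nonneg z).
  replace f with ((f - Z.to_nat (digit_bound z)) + Z.to_nat (digit_bound z))%nat
    by lia.
  induction (f - Z.to_nat (digit_bound z))%nat as [| k IH]; [reflexivity |].
  rewrite IH; simpl plus; rewrite negabin_digits_aux_succ by lia; reflexivity.
Qed.

Lemma ones_parity_cons (d : Z) (ds : list Z) :
  ones_parity (d :: ds) = xorb (d =? 1) (ones_parity ds).
Proof.
  unfold ones_parity; simpl.
  destruct (d =? 1); simpl; [rewrite Nat.odd_succ, <- Nat.negb_odd |]; reflexivity.
Qed.

Lemma negaparity_step (z : Z) :
  negaparity z = xorb (z mod 2 =? 1) (negaparity ((z - z mod 2) / (-2))).
Proof.
  destruct (Z.eq_dec z 0) as [-> | Hz]; [reflexivity |].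
  pose proof (digit_bound_lt z Hz).
  set (q := (z - z mod 2) / (-2)) in *.
  pose proof (digit_bound_nonneg q).
  rewrite (negaparity_fuel (S (Z.to_nat (digit_bound z))) z) by lia.
  rewrite (negaparity_fuel (Z.to_nat (digit_bound z)) q) by lia.
  rewrite negabin_digits_aux_cons by assumption.
  apply ones_parity_cons.
Qed.

Lemma negaparity_double (k : Z) : negaparity (2 * k) = negaparity (- k).
Proof.
  rewrite negaparity_step.
  replace ((2 * k) mod 2) with 0 by (Z.div_mod_to_equations; lia).
  replace ((2 * k - 0) / (-2)) with (- k) by (Z.div_mod_to_equations; lia).
  reflexivity.
Qed.

Lemma negaparity_double_succ (k : Z) :
  negaparity (2 * k + 1) = negb (negaparity (2 * k)).
Proof.
  rewrite negaparity_step, negaparity_double.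
  replace ((2 * k + 1) mod 2) with 1 by (Z.div_mod_to_equations; lia).
  replace ((2 * k + 1 - 1) / (-2)) with (- k) by (Z.div_mod_to_equations; lia).
  reflexivity.
Qed.

Lemma g_negaparity (n : nat) : g n = Nat.b2n (negaparity (Z.of_nat n)).
Proof.
  unfold g, negabin_digits.
  rewrite (negaparity_fuel (S (S n))) by (unfold digit_bound;
    destruct (Z.eqb_spec (Z.of_nat n) 0), (Z.eqb_spec (Z.of_nat n) 1); simpl; lia).
  unfold ones_parity.
  generalize (length (filter (fun d => d =? 1) (negabin_digits_aux (S (S n)) (Z.of_nat n)))).
  intros c; symmetry; apply (Nat.mod_unique _ _ (Nat.div2 c)).
  - destruct (Nat.odd c); simpl; lia.
  - apply Nat.div2_odd.
Qed.

Lemma negaparity_eq_of_g_eq (n n' : nat) :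
  g n = g n' -> negaparity (Z.of_nat n) = negaparity (Z.of_nat n').
Proof.
  rewrite !g_negaparity.
  destruct (negaparity (Z.of_nat n)), (negaparity (Z.of_nat n')); simpl; congruence.
Qed.

Lemma even_or_odd (z : Z) : exists k, z = 2 * k \/ z = 2 * k + 1.
Proof. exists (z / 2); Z.div_mod_to_equations; lia. Qed.

Definition cube_at (f : Z -> bool) (a m : Z) : Prop :=
  forall j, a <= j < a + 2 * m -> f j = f (j + m).

Lemma cube_at_of_nat (f : Z -> bool) (a m : nat) :
  (forall i : nat, (i < m)%nat ->
     f (Z.of_nat (a + i)) = f (Z.of_nat (a + m + i)) /\
     f (Z.of_nat (a + i)) = f (Z.of_nat (a + 2 * m + i))) ->
  cube_at f (Z.of_nat a) (Z.of_nat m).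
Proof.
  intros H j Hj.
  destruct (Z_lt_le_dec j (Z.of_nat (a + m))) as [Hlt | Hge].
  - destruct (H (Z.to_nat j - a)%nat ltac:(lia)) as [H1 _].
    replace (Z.of_nat (a + (Z.to_nat j - a))) with j in H1 by lia.
    replace (Z.of_nat (a + m + (Z.to_nat j - a))) with (j + Z.of_nat m) in H1 by lia.
    exact H1.
  - destruct (H (Z.to_nat j - a - m)%nat ltac:(lia)) as [H1 H2].
    replace (Z.of_nat (a + m + (Z.to_nat j - a - m))) with j in H1 by lia.
    replace (Z.of_nat (a + 2 * m + (Z.to_nat j - a - m)))
      with (j + Z.of_nat m) in H2 by lia.
    congruence.
Qed.

Section NoCube.

Variable f : Z -> bool.
Hypothesis f_double : forall k, f (2 * k) = f (- k).
Hypothesis f_double_succ : forall k, f (2 * k + 1) = negb (f (2 * k)).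

Lemma no_triple_run (z : Z) : ~ (f z = f (z + 1) /\ f (z + 1) = f (z + 2)).
Proof.
  intros [H1 H2].
  destruct (even_or_odd z) as [k [-> | ->]].
  - rewrite f_double_succ in H1; destruct (f (2 * k)); discriminate.
  - replace (2 * k + 1 + 2) with (2 * (k + 1) + 1) in H2 by lia.
    replace (2 * k + 1 + 1) with (2 * (k + 1)) in H2 by lia.
    rewrite f_double_succ in H2; destruct (f (2 * (k + 1))); discriminate.
Qed.

Lemma cube_at_even_start (a t : Z) :
  0 < t -> cube_at f a (2 * t) -> exists b, cube_at f (2 * b) (2 * t).
Proof.
  intros Ht Hcube.
  destruct (even_or_odd a) as [b [-> | ->]]; exists b; [exact Hcube |].
  intros j Hj.
  destruct (Z.eq_dec j (2 * b)) as [-> | Hne]; [| apply Hcube; lia].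
  (* Both [2b] and [2b + 2t] are even, so their values are the negations of the next ones. *)
  pose proof (Hcube (2 * b + 1) ltac:(lia)) as Hnext.
  replace (2 * b + 1 + 2 * t) with (2 * (b + t) + 1) in Hnext by lia.
  replace (2 * b + 2 * t) with (2 * (b + t)) by lia.
  rewrite !f_double_succ in Hnext.
  destruct (f (2 * b)), (f (2 * (b + t))); simpl in *; congruence.
Qed.

Lemma cube_at_fold (b t : Z) :
  cube_at f (2 * b) (2 * t) -> cube_at f (- b - 3 * t + 1) t.
Proof.
  intros Hcube j Hj.
  replace j with (- (- j)) by lia; replace (- - j + t) with (- (- j - t)) by lia.
  rewrite <- !f_double.
  replace (2 * - j) with (2 * (- j - t) + 2 * t) by lia.
  symmetry; apply Hcube; lia.
Qed.

Lemma no_cube_odd_period (a t : Z) : 0 < t -> ~ cube_at f a (2 * t + 1).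
Proof.
  intros Ht Hcube.
  (* Shifting by the odd period swaps the roles of even and odd places. *)
  assert (Hstep : forall r, a <= 2 * r -> 2 * r + 2 < a + 2 * (2 * t + 1) ->
                            f (2 * r) = f (2 * r + 2)).
  { intros r H1 H2.
    pose proof (Hcube (2 * r + 1) ltac:(lia)) as E1.
    pose proof (Hcube (2 * r + 2) ltac:(lia)) as E2.
    replace (2 * r + 1 + (2 * t + 1)) with (2 * (r + t + 1)) in E1 by lia.
    replace (2 * r + 2 + (2 * t + 1)) with (2 * (r + t + 1) + 1) in E2 by lia.
    rewrite f_double_succ in E1, E2.
    replace (2 * r + 2) with (2 * (r + 1)) in E2 |- * by lia.
    rewrite <- E1 in E2.
    destruct (f (2 * r)), (f (2 * (r + 1))); simpl in *; congruence. }
  destruct (even_or_odd (a + 1)) as [k Hk].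
  pose proof (Hstep k ltac:(lia) ltac:(lia)) as S1.
  pose proof (Hstep (k + 1) ltac:(lia) ltac:(lia)) as S2.
  replace (2 * k + 2) with (2 * (k + 1)) in S1 by lia.
  replace (2 * (k + 1) + 2) with (2 * (k + 2)) in S2 by lia.
  rewrite !f_double in S1, S2.
  apply (no_triple_run (- k - 2)).
  replace (- k - 2 + 2) with (- k) by lia;
    replace (- k - 2 + 1) with (- (k + 1)) by lia;
    replace (- k - 2) with (- (k + 2)) by lia.
  split; congruence.
Qed.

Lemma no_cube (a m : Z) : 0 < m -> ~ cube_at f a m.
Proof.
  revert a; induction m as [m IH] using (well_founded_induction (Z.lt_wf 0)).
  intros a Hm Hcube.
  destruct (even_or_odd m) as [t [-> | ->]].
  - destruct (cube_at_even_start a t ltac:(lia) Hcube) as [b Hb].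
    exact (IH t ltac:(lia) _ ltac:(lia) (cube_at_fold b t Hb)).
  - destruct (Z.eq_dec t 0) as [-> | Ht].
    + apply (no_triple_run a); split; [| replace (a + 2) with (a + 1 + 1) by lia];
        apply Hcube; lia.
    + exact (no_cube_odd_period a t ltac:(lia) Hcube).
Qed.

End NoCube.

Theorem theorem5 :
  ~ (exists (a m : nat), (0 < m)%nat /\
       forall i : nat, (i < m)%nat ->
         g (a + i) = g (a + m + i) /\ g (a + i) = g (a + 2 * m + i)).
Proof.
  intros [a [m [Hm Hcube]]].
  apply (no_cube negaparity negaparity_double negaparity_double_succ
           (Z.of_nat a) (Z.of_nat m) ltac:(lia)).
  apply cube_at_of_nat; intros i Hi.
  destruct (Hcube i Hi) as [H1 H2].
  split; apply negaparity_eq_of_g_eq; assumption.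
Qed.
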